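(* For every integer $n\geq 1$ there exists a non-empty crowded T$_1$ space $Y_n$ that is hereditarily $(n+1)$-irresolvable and has a crowded dense $n$-partition.
   Context: A space is crowded if it has no isolated points; a subset $S$ of $X$ is crowded in $X$ if it has no isolated points as a subspace. A $k$-partition of $X$ is a family of exactly $k$ non-empty, pairwise disjoint subsets (cells) with union $X$; it is dense if each cell is dense in $X$, and crowded if each cell is crowded. A space is $k$-resolvable if it has $k$ pairwise disjoint non-empty dense subsets, $k$-irresolvable otherwise, and hereditarily $k$-irresolvable if every non-empty subspace is $k$-irresolvable. *)

From mathcomp Require Import all_boot all_order all_algebra.
From mathcomp Require Import all_classical all_reals all_analysis.
Set Implicit Arguments. Unset Strict Implicit. Unset Printing Implicit Defensive.
Local Open Scope classical_set_scope.

Section Defs.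
Context {T : topologicalType}.

Definition isolated_in (S : set T) (x : T) : Prop :=
  S x /\ exists U : set T, open U /\ U `&` S = [set x].

Definition crowded_in (S : set T) : Prop := forall x, ~ isolated_in S x.

Definition crowded_space : Prop := crowded_in setT.

Definition dense_in (Y D : set T) : Prop :=
  forall U : set T, open U -> U `&` Y !=set0 -> U `&` D !=set0.

Definition resolvable_in (k : nat) (Y : set T) : Prop :=
  exists D : 'I_k -> set T,
    [/\ forall i, D i `<=` Y,
        forall i, D i !=set0,
        forall i j, i != j -> D i `&` D j = set0
      & forall i, dense_in Y (D i)].

Definition hereditarily_irresolvable (k : nat) : Prop :=
  forall Y : set T, Y !=set0 -> ~ resolvable_in k Y.

Definition is_partition (k : nat) (P : 'I_k -> set T) : Prop :=
  [/\ forall i, P i !=set0,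
      forall i j, i != j -> P i `&` P j = set0
    & \bigcup_(i in [set: 'I_k]) P i = setT].

Definition crowded_dense_partition (k : nat) (P : 'I_k -> set T) : Prop :=
  [/\ is_partition P, forall i, dense (P i) & forall i, crowded_in (P i)].

End Defs.

From HB Require Import structures.
From mathcomp Require Import all_boot all_order all_algebra.
From mathcomp Require Import all_classical all_reals all_analysis.

Set Implicit Arguments.
Unset Strict Implicit.
Unset Printing Implicit Defensive.
Local Open Scope classical_set_scope.

(* Let U be a free ultrafilter on nat and topologize nat * 'I_n by declaring
   a set open when it is empty or each of its n fibers lies in U.  The rows
   nat * {i} are then dense and crowded, and points are closed since U is
   free.  If a subspace S has a fiber in U, so does each dense subset D of S,
   for otherwise the complement of D would be open and meet S; among n+1
   disjoint dense subsets two would then have a fiber in U at the same index,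
   which is impossible.  If no fiber of S is in U, then ~` S `|` [set y] is
   open for every y in S, so S is discrete and not even 2-resolvable. *)

Section Isolated.
Context {T : topologicalType}.

Lemma isolated_inS (S S' : set T) x :
  S `<=` S' -> S x -> isolated_in S' x -> isolated_in S x.
Proof.
move=> sSS' Sx [_ [U [oU US'x]]]; split=> //; exists U; split=> //.
apply/seteqP; split=> [y [Uy Sy]|_ ->].
  by rewrite -US'x; split=> //; exact: sSS'.
by split=> //; have [] : (U `&` S') x by rewrite US'x.
Qed.

Lemma crowded_space_cover (I : Type) (P : I -> set T) :
  \bigcup_(i in setT) P i = setT -> (forall i, crowded_in (P i)) ->
  @crowded_space T.
Proof.
move=> cover crowdedP x isox.
have [i _ Pix] : (\bigcup_(i in setT) P i) x by rewrite cover.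
by apply: (crowdedP i x); apply: isolated_inS isox.
Qed.

Lemma dense_in_isolated (S D : set T) y :
  isolated_in S y -> D `<=` S -> dense_in S D -> D y.
Proof.
move=> [Sy [U [oU US]]] DS /(_ U oU) [].
  by exists y; rewrite US.
move=> z [Uz Dz]; have : (U `&` S) z by split=> //; exact: DS.
by rewrite US => <-.
Qed.

Lemma isolated_not_resolvable k (S : set T) y :
  (1 < k)%N -> isolated_in S y -> ~ resolvable_in k S.
Proof.
move=> k_gt1 isoy [D [DS _ Ddisj Ddense]].
pose i0 : 'I_k := Ordinal (ltnW k_gt1); pose i1 : 'I_k := Ordinal k_gt1.
have : (D i0 `&` D i1) y by split; exact: dense_in_isolated isoy (DS _) (Ddense _).
by rewrite Ddisj.
Qed.

End Isolated.

Definition fiber_space (X : choiceType) (F : pfilter_on X) (I : choiceType) :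
  Type := (X * I)%type.

Section FiberSpace.
Context {X I : choiceType} (F : pfilter_on X).
Local Notation Y := (fiber_space F I).

HB.instance Definition _ := Choice.on Y.

Definition fiber (U : set Y) (i : I) : set X := [set x | U (x, i)].

Definition fiber_open (U : set Y) : Prop := U = set0 \/ forall i, F (fiber U i).

Lemma fiber_openT : fiber_open setT.
Proof. by right=> i; apply: filterS filterT. Qed.

Lemma fiber_openI : setI_closed fiber_open.
Proof.
move=> A B [->|FA]; first by left; rewrite set0I.
move=> [->|FB]; first by left; rewrite setI0.
by right=> i; apply: filterS (filterI (FA i) (FB i)).
Qed.

Lemma fiber_open_bigU (J : Type) (f : J -> set Y) :
  (forall j, fiber_open (f j)) -> fiber_open (\bigcup_j f j).
Proof.
move=> fo; have [[j [p fjp]]|f0] := pselect (exists j, f j !=set0).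
  right=> i; case: (fo j) => [fj0|Ffj]; first by rewrite fj0 in fjp.
  by apply: filterS (Ffj i) => x fjx; exists j.
by left; apply/seteqP; split=> // p [j _ fjp]; apply: f0; exists j, p.
Qed.

HB.instance Definition _ :=
  isOpenTopological.Build Y fiber_openT fiber_openI fiber_open_bigU.

Lemma fiber_openP (U : set Y) : open U <-> fiber_open U.
Proof.
rewrite openE /interior /=; split=> [Uo|fU p Up]; last by exists U; split.
have -> : U = \bigcup_(B : {B : set Y & fiber_open B /\ B `<=` U}) projT1 B.
  apply/seteqP; split; last by move=> p [B _ Bp]; have [_] := projT2 B; apply.
  by move=> p /Uo [B [fB Bp BU]]; exists (existT _ B (conj fB BU)).
by apply: fiber_open_bigU => B; have [] := projT2 B.
Qed.

Lemma fiber_open_nonempty (U : set Y) :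
  open U -> U !=set0 -> forall i, F (fiber U i).
Proof. by move=> /fiber_openP [-> []|]. Qed.

Definition row (i : I) : set Y := [set p | p.2 = i].

Lemma dense_row i : dense (row i).
Proof.
move=> U U_neq0 /fiber_open_nonempty /(_ U_neq0 i) /filter_ex [x Ux].
by exists (x, i).
Qed.

Section Free.
Hypothesis F_free : forall x, F (~` [set x]).

Lemma crowded_row i : crowded_in (row i).
Proof.
move=> y [rowy [U [oU Urow]]].
have Uy : U y by have [] : (U `&` row i) y by rewrite Urow.
have FU := fiber_open_nonempty oU (ex_intro _ y Uy) i.
have [x [Ux xy]] := filter_ex (filterI FU (F_free y.1)).
by apply: xy; have : (U `&` row i) (x, i) by []; rewrite Urow => <-.
Qed.

Lemma fiber_space_accessible : @accessible_space Y.
Proof.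
move=> x y xy; exists (~` [set y]); split.
- apply/fiber_openP; right=> i; apply: filterS (F_free y.1) => z zy zyi.
  by apply: zy; rewrite -zyi.
- by apply/mem_set => exy; rewrite exy eqxx in xy.
- by apply/mem_set => /(_ erefl).
Qed.

End Free.

Section Ultra.
Context {FU : UltraFilter F}.

Lemma dense_in_fiber (S D : set Y) i :
  F (fiber S i) -> dense_in S D -> exists j, F (fiber D j).
Proof.
move=> FS Ddense; apply: contrapT => noFD.
have FDC j : F (fiber (~` D) j).
  have [FD|//] := in_ultra_setVsetC (fiber D j) FU.
  by case: noFD; exists j.
have [|p [DCp Dp]] := Ddense (~` D) (proj2 (fiber_openP _) (or_intror FDC)).
  by have [x [DCx Sx]] := filter_ex (filterI (FDC i) FS); exists (x, i).
exact: DCp.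
Qed.

Lemma isolated_in_of_fibers_notin (S : set Y) y :
  (forall i, ~ F (fiber S i)) -> S y -> isolated_in S y.
Proof.
move=> thinS Sy; split=> //; exists (~` S `|` [set y]); split.
  apply/fiber_openP; right=> i.
  have [FS|FSC] := in_ultra_setVsetC (fiber S i) FU; first by case: (thinS i).
  by apply: filterS FSC => x Sx; left.
by apply/seteqP; split=> [p [[//|->]]|_ ->]; split=> //; right.
Qed.

End Ultra.

End FiberSpace.

Lemma fiber_space_hereditarily_irresolvable (X : choiceType) (F : pfilter_on X)
    (I : finType) k :
  UltraFilter F -> (#|I| < k)%N ->
  @hereditarily_irresolvable (fiber_space F I) k.
Proof.
move=> FU card_lt S [y Sy] resS.
have [[i FS]|thinS] := pselect (exists i, F (fiber S i)); last first.
  have thin i : ~ F (fiber S i) by move=> FSi; apply: thinS; exists i.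
  apply: isolated_not_resolvable (isolated_in_of_fibers_notin thin Sy) resS.
  by apply: leq_ltn_trans card_lt; apply/card_gt0P; exists y.2.
have [D [_ _ Ddisj Ddense]] := resS.
have /choice [f Ff] j : exists i, F (fiber (D j) i).
  exact: dense_in_fiber FS (Ddense j).
have /injectivePn [j1 [j2 j12 fj12]] : ~~ injectiveb f.
  by apply/injectiveP => /leq_card; rewrite card_ord leqNgt card_lt.
apply: (@filter_not_empty _ F); apply: filterS (filterI (Ff j1) (Ff j2)).
move=> x [D1x]; rewrite -fj12 => D2x.
by have : (D j1 `&` D j2) (x, f j1) by []; rewrite Ddisj.
Qed.

Lemma row_crowded_dense_partition (X : choiceType) (F : pfilter_on X) k :
  (forall x, F (~` [set x])) -> crowded_dense_partition (@row X 'I_k F).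
Proof.
move=> F_free; split; last 2 first.
- exact: dense_row.
- exact: crowded_row.
split.
- by move=> i; have [x _] := filter_ex (@filterT _ F _); exists (x, i).
- move=> i j ij; apply/seteqP; split=> // p [pi pj].
  by rewrite -pi -pj eqxx in ij.
- by apply/seteqP; split=> // p _; exists p.2.
Qed.

Lemma free_ultrafilter_nat :
  exists F : pfilter_on nat, UltraFilter F /\ forall m, F (~` [set m]).
Proof.
have [F [FU evF]] := ultraFilterLemma (@eventually_filter).
exists (PFilterPack F _); split=> // m; apply: evF; exists m.+1 => // p /= mp pm.
by rewrite pm ltnn in mp.
Qed.

Theorem theorem4 (n : nat) (hn : (1 <= n)%N) :
  exists Y : topologicalType,
    [/\ [set: Y] !=set0,
        @crowded_space Y,
        @accessible_space Y,
        @hereditarily_irresolvable Y n.+1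
      & exists P : 'I_n -> set Y, crowded_dense_partition P].
Proof.
have [F [FU F_free]] := free_ultrafilter_nat.
have rowsP := row_crowded_dense_partition n F_free.
have [[row_neq0 _ row_cover] _ crowded_rows] := rowsP.
exists (fiber_space F 'I_n); split.
- by have [p _] := row_neq0 (Ordinal hn); exists p.
- exact: crowded_space_cover row_cover crowded_rows.
- exact: fiber_space_accessible.
- by apply: fiber_space_hereditarily_irresolvable; rewrite card_ord.
- exact: ex_intro _ _ rowsP.
Qed.
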